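(* Let $(\mathcal{X},\mathcal{Y},W)$ be a discrete memoryless channel with finite alphabets and $|\mathcal{X}|\le3$. Then the channel is non-redundant if and only if for all $p,q\in\mathcal{P}(\mathcal{X})$, $W\circ p=W\circ q$ implies $p=q$.
   Context: $\mathcal{P}(\mathcal{X})$ is the set of probability distributions on $\mathcal{X}$; $W_x=W(\cdot|x)$ and $(W\circ p)(y)=\sum_{x}p(x)W(y|x)$. The channel is non-redundant if there exists $\eta>0$ such that for all $x\in\mathcal{X}$ and all $p\in\mathcal{P}(\mathcal{X})$ with $p(x)=0$, $\|W_x-W\circ p\|_1\ge\eta$. *)

From mathcomp Require Import all_boot all_order all_algebra.
Set Implicit Arguments. Unset Strict Implicit. Unset Printing Implicit Defensive.
Import Order.TTheory GRing.Theory Num.Theory.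
Local Open Scope ring_scope.

Definition is_distr (R : realFieldType) (T : finType) (p : T -> R) : Prop :=
  (forall t, 0 <= p t) /\ \sum_(t : T) p t = 1.

(* A discrete memoryless channel W(y|x) = W x y: every row W_x is a distribution. *)
Definition is_channel (R : realFieldType) (X Y : finType) (W : X -> Y -> R) : Prop :=
  forall x, is_distr (W x).

Definition chan_out (R : realFieldType) (X Y : finType) (W : X -> Y -> R)
  (p : X -> R) : Y -> R := fun y => \sum_(x : X) p x * W x y.

Definition l1dist (R : realFieldType) (T : finType) (f g : T -> R) : R :=
  \sum_(t : T) `|f t - g t|.

Definition non_redundant (R : realFieldType) (X Y : finType) (W : X -> Y -> R) : Prop :=
  exists eta : R, 0 < eta /\
    forall (x : X) (p : X -> R), is_distr p -> p x = 0 ->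
      eta <= l1dist (W x) (chan_out W p).

From mathcomp Require Import all_boot all_order all_algebra.
From mathcomp Require Import reals.
From mathcomp Require Import ring lra zify.
From Stdlib Require Import FunctionalExtensionality.
Set Implicit Arguments. Unset Strict Implicit. Unset Printing Implicit Defensive.
Import Order.TTheory GRing.Theory Num.Theory.
Local Open Scope ring_scope.

(* If W is injective on distributions, it is injective on all signed vectors d:
   a nonzero d in the kernel has zero mass, so its normalized positive and
   negative parts are two distinct distributions with the same image. An
   injective linear map between finite-dimensional spaces is bounded below in
   l1, which gives a uniform eta (for any input alphabet).
   Conversely, let W o p = W o q with p <> q and d = p - q. As d has zero mass
   and at most three coordinates, one of its two sign classes is a single point
   x0; then r = e_x0 - d / d x0 is a distribution with r x0 = 0 and
   W o r = W_x0, so no eta > 0 works. *)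

Lemma row_free_l1_lower_bound (R : realFieldType) m n (A : 'M[R]_(m, n)) :
  row_free A ->
  exists2 K : R, 0 < K &
    forall (v : 'rV_m) i, `|v 0 i| <= K * \sum_j `|(v *m A) 0 j|.
Proof.
move=> /row_freeP[B AB].
pose K := 1 + \sum_j \sum_i `|B j i|.
have B_le_K j i : `|B j i| <= K.
  rewrite /K -[`|B j i|]add0r lerD // (bigD1 j) //= (bigD1 i) //= -addrA lerDl.
  by apply: addr_ge0; apply: sumr_ge0 => *; rewrite ?sumr_ge0.
exists K; first by rewrite ltr_pwDl // sumr_ge0 // => *; rewrite sumr_ge0.
move=> v i.
have -> : v 0 i = \sum_j (v *m A) 0 j * B j i.
  by rewrite -[v in LHS]mulmx1 -AB mulmxA mxE.
rewrite mulr_sumr; apply: (le_trans (ler_norm_sum _ _ _)).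
by apply: ler_sum => j _; rewrite normrM mulrC ler_wpM2r.
Qed.

Section SignIsolated.

Variables (R : realFieldType) (T : finType).

Lemma sign_isolated_of_pos_singleton (d : T -> R) x0 :
  [set t | 0 < d t] = [set x0] ->
  d x0 != 0 /\ forall y, y != x0 -> d y * d x0 <= 0.
Proof.
move=> pos1; have := set11 x0; rewrite -pos1 inE => dx0_gt0.
split=> [|y yx0]; first by rewrite gt_eqF.
have : y \notin [set t | 0 < d t] by rewrite pos1 in_set1.
by rewrite inE -leNgt => dy_le0; rewrite mulr_le0_ge0 // ltW.
Qed.

Lemma exists_pos_of_mass0 (d : T -> R) x1 :
  \sum_x d x = 0 -> d x1 != 0 -> exists x, 0 < d x.
Proof.
move=> mass0 dx1; apply/existsP; apply: contraNT dx1 => /existsPn d_le0.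
rewrite -oppr_eq0; apply/eqP.
apply: (psumr_eq0P (P := predT) (F := fun x => - d x)) => // [x _|].
  by rewrite oppr_ge0 leNgt d_le0.
by rewrite sumrN mass0 oppr0.
Qed.

Lemma sign_isolated_coord (d : T -> R) x1 :
  (#|T| <= 3)%N -> \sum_x d x = 0 -> d x1 != 0 ->
  exists x0, d x0 != 0 /\ forall y, y != x0 -> d y * d x0 <= 0.
Proof.
move=> cardT mass0 dx1.
pose P := [set t | 0 < d t]; pose N := [set t | 0 < - d t].
have [xp dxp_gt0] := exists_pos_of_mass0 mass0 dx1.
have [xn dxn_lt0] : exists x, 0 < - d x.
  apply: (exists_pos_of_mass0 (d := fun t => - d t) (x1 := x1)).
    by rewrite sumrN mass0 oppr0.
  by rewrite oppr_eq0.
have PN0 : P :&: N = set0.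
  apply/setP => t; rewrite !inE oppr_gt0.
  by apply/negbTE/negP => /andP[/lt_trans h /h]; rewrite ltxx.
have [/eqP/cards1P[x0 P1] | /eqP/cards1P[x0 N1]] : #|P| = 1%N \/ #|N| = 1%N.
  have P_gt0 : (0 < #|P|)%N by apply/card_gt0P; exists xp; rewrite inE.
  have N_gt0 : (0 < #|N|)%N by apply/card_gt0P; exists xn; rewrite inE.
  have : (#|P| + #|N| <= 3)%N.
    by rewrite -cardsUI PN0 cards0 addn0; apply: leq_trans (max_card _) cardT.
  lia.
- by exists x0; apply: sign_isolated_of_pos_singleton.
- have [Ndx0 N_isolated] := sign_isolated_of_pos_singleton (d := fun t => - d t) N1.
  exists x0; split=> [|y /N_isolated]; last by rewrite mulrNN.
  by rewrite -oppr_eq0.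
Qed.

End SignIsolated.

Section Channel.

Variables (R : realFieldType) (X Y : finType) (W : X -> Y -> R).

Lemma chan_out_delta x : chan_out W (fun t => (t == x)%:R) = W x.
Proof.
apply: functional_extensionality => y; rewrite /chan_out (bigD1 x) //= eqxx.
by rewrite mul1r big1 ?addr0 // => t /negbTE ->; rewrite mul0r.
Qed.

Lemma chan_outB f g y :
  chan_out W (fun t => f t - g t) y = chan_out W f y - chan_out W g y.
Proof. by rewrite /chan_out -sumrB; apply: eq_bigr => t _; rewrite mulrBl. Qed.

Lemma chan_outMr f c y : chan_out W (fun t => f t * c) y = chan_out W f y * c.
Proof. by rewrite /chan_out mulr_suml; apply: eq_bigr => t _; rewrite mulrAC. Qed.

Lemma sum_chan_out f : is_channel W -> \sum_y chan_out W f y = \sum_x f x.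
Proof.
move=> HW; rewrite /chan_out exchange_big /=.
by apply: eq_bigr => x _; rewrite -mulr_sumr (proj2 (HW x)) mulr1.
Qed.

Definition pos_part_distr (d : X -> R) (x : X) : R :=
  (`|d x| + d x) / \sum_t `|d t|.

Lemma pos_part_distr_is_distr d :
  \sum_x d x = 0 -> 0 < \sum_t `|d t| -> is_distr (pos_part_distr d).
Proof.
move=> mass0 S_gt0; split=> [x|].
  apply: divr_ge0; last exact: ltW.
  by have := ler_norm (- d x); rewrite normrN; lra.
by rewrite -mulr_suml big_split /= mass0 addr0 mulfV ?gt_eqF.
Qed.

Lemma pos_part_distrB d x :
  pos_part_distr d x - pos_part_distr (fun t => - d t) x
  = 2 * d x / \sum_t `|d t|.
Proof.
rewrite /pos_part_distr.
have -> : \sum_t `|- d t| = \sum_t `|d t| by apply: eq_bigr => t _; rewrite normrN.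
by rewrite normrN -mulrBl; congr (_ / _); ring.
Qed.

Lemma chan_out_kernel_trivial :
  is_channel W ->
  (forall p q : X -> R, is_distr p -> is_distr q ->
      chan_out W p = chan_out W q -> p = q) ->
  forall d : X -> R, (forall y, chan_out W d y = 0) -> forall x, d x = 0.
Proof.
move=> HW inj_distr d Wd0 x.
have mass0 : \sum_x d x = 0.
  by rewrite -sum_chan_out // big1.
have [S0 | S_neq0] := eqVneq (\sum_t `|d t|) 0.
  by apply/normr0_eq0; apply: (psumr_eq0P (P := predT) _ S0).
have S_gt0 : 0 < \sum_t `|d t| by rewrite lt0r S_neq0 sumr_ge0.
have dist_neg : is_distr (pos_part_distr (fun t => - d t)).
  apply: pos_part_distr_is_distr; first by rewrite sumrN mass0 oppr0.
  by under eq_bigr do rewrite normrN.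
have same_out : chan_out W (pos_part_distr d) =
                chan_out W (pos_part_distr (fun t => - d t)).
  apply: functional_extensionality => y; apply/eqP; rewrite -subr_eq0 -chan_outB.
  have -> : (fun t => pos_part_distr d t - pos_part_distr (fun t => - d t) t)
            = (fun t => d t * (2 / \sum_t `|d t|)).
    by apply: functional_extensionality => t; rewrite pos_part_distrB; ring.
  by rewrite chan_outMr Wd0 mul0r.
have /eqP := congr1 (fun f => f x)
  (inj_distr _ _ (pos_part_distr_is_distr mass0 S_gt0) dist_neg same_out).
rewrite -subr_eq0 pos_part_distrB !mulf_eq0 invr_eq0 (negbTE S_neq0) orbF.
by rewrite pnatr_eq0 => /eqP.
Qed.

Definition chan_mx : 'M[R]_(#|X|, #|Y|) :=
  \matrix_(i, j) W (enum_val i) (enum_val j).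

Definition fun_rV (f : X -> R) : 'rV[R]_#|X| := \row_i f (enum_val i).

Lemma fun_rV_mulmx f j :
  (fun_rV f *m chan_mx) 0 j = chan_out W f (enum_val j).
Proof.
rewrite mxE /chan_out (big_enum_val (A := X)).
by apply: eq_bigr => i _; rewrite !mxE.
Qed.

Lemma fun_rV_enum_rank (v : 'rV[R]_#|X|) : fun_rV (fun x => v 0 (enum_rank x)) = v.
Proof. by apply/rowP => i; rewrite mxE enum_valK. Qed.

Lemma l1dist_enum (f g : Y -> R) :
  l1dist f g = \sum_(j < #|Y|) `|f (enum_val j) - g (enum_val j)|.
Proof. by rewrite /l1dist (big_enum_val (A := Y)). Qed.

Lemma non_redundant_of_inj :
  is_channel W ->
  (forall p q : X -> R, is_distr p -> is_distr q ->
      chan_out W p = chan_out W q -> p = q) ->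
  non_redundant W.
Proof.
move=> HW inj_distr.
have free_chan_mx : row_free chan_mx.
  rewrite -kermx_eq0; apply/rowV0P => v /sub_kermxP vW0.
  apply/rowP => i; rewrite mxE -(enum_valK i).
  apply: (chan_out_kernel_trivial HW inj_distr (d := fun x => v 0 (enum_rank x))) => y.
  by rewrite -(enum_rankK y) -fun_rV_mulmx fun_rV_enum_rank vW0 mxE.
have [K K_gt0 bound] := row_free_l1_lower_bound free_chan_mx.
exists K^-1; split=> [|x p _ px0]; first by rewrite invr_gt0.
pose f t := (t == x)%:R - p t.
have := bound (fun_rV f) (enum_rank x).
rewrite mxE enum_rankK /f eqxx px0 subr0 normr1.
under eq_bigr do rewrite fun_rV_mulmx chan_outB chan_out_delta.
by rewrite (l1dist_enum (W x)) -[K^-1]mulr1 ler_pdivrMl.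
Qed.

Lemma isolated_kernel_vector_redundant (d : X -> R) x0 :
  \sum_x d x = 0 -> (forall y, chan_out W d y = 0) ->
  d x0 != 0 -> (forall y, y != x0 -> d y * d x0 <= 0) ->
  ~ non_redundant W.
Proof.
move=> mass0 Wd0 dx0 isolated [eta [eta_gt0 nonred]].
pose r y := (y == x0)%:R - d y / d x0.
have r_distr : is_distr r.
  split=> [y|].
    rewrite /r; have [->|yx0] := eqVneq y x0; first by rewrite mulfV ?subrr.
    rewrite sub0r oppr_ge0.
    have -> : d y / d x0 = d y * d x0 / d x0 ^+ 2 by field.
    by rewrite mulr_le0_ge0 ?isolated ?invr_ge0 ?sqr_ge0.
  rewrite /r sumrB -mulr_suml mass0 mul0r subr0.
  by rewrite (bigD1 x0) //= eqxx big1 ?addr0 // => y /negbTE ->.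
have r_out : chan_out W r = W x0.
  apply: functional_extensionality => y.
  by rewrite chan_outB chan_out_delta chan_outMr Wd0 mul0r subr0.
have rx0 : r x0 = 0 by rewrite /r eqxx mulfV ?subrr.
have := nonred x0 r r_distr rx0.
rewrite r_out /l1dist big1 => [|y _]; last by rewrite subrr normr0.
by rewrite lt_geF.
Qed.

Lemma inj_of_non_redundant :
  (#|X| <= 3)%N -> non_redundant W ->
  forall p q : X -> R, is_distr p -> is_distr q ->
    chan_out W p = chan_out W q -> p = q.
Proof.
move=> cardX nonred p q [_ p1] [_ q1] same_out.
apply: functional_extensionality => x1.
have [/eqP|dx1] := eqVneq (p x1 - q x1) 0; first by rewrite subr_eq0 => /eqP.
have mass0 : \sum_t (p t - q t) = 0 by rewrite sumrB p1 q1 subrr.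
have [x0 [dx0 isolated]] := sign_isolated_coord cardX mass0 dx1.
exfalso; apply: (isolated_kernel_vector_redundant mass0 _ dx0 isolated nonred).
by move=> y; rewrite chan_outB same_out subrr.
Qed.

End Channel.

Theorem proposition2 (R : realType) (X Y : finType) (W : X -> Y -> R) :
  is_channel W -> (#|X| <= 3)%N ->
  (non_redundant W <->
   (forall p q : X -> R, is_distr p -> is_distr q ->
      chan_out W p = chan_out W q -> p = q)).
Proof.
move=> HW cardX; split.
  exact: inj_of_non_redundant.
exact: non_redundant_of_inj.
Qed.
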